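(* Let $p\ne5$ be an odd prime. Then $$(-1)^{[p/4]}\sum_{k=0}^{[p/4]}\binom{4k}{2k}\frac1{80^k}\equiv\begin{cases}\pm1\pmod p&\text{if }p\equiv\pm1\pmod5,\\ \pm\frac12\pmod p&\text{if }p\equiv\pm2\pmod5.\end{cases}$$
   Context: $[x]$ is the greatest integer $\le x$. *)

From HB Require Import structures.
From mathcomp Require Import all_boot all_order all_algebra.
Set Implicit Arguments. Unset Strict Implicit. Unset Printing Implicit Defensive.
Import GRing.Theory.
Local Open Scope ring_scope.

Definition S80 (p : nat) : 'F_p :=
  (-1) ^+ (p %/ 4) * \sum_(0 <= k < (p %/ 4).+1) ('C(4 * k, 2 * k))%:R / (80%:R) ^+ k.

From HB Require Import structures.
From mathcomp Require Import all_boot all_order all_algebra.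
From mathcomp Require Import ring zify.
Set Implicit Arguments. Unset Strict Implicit. Unset Printing Implicit Defensive.
Import GRing.Theory.
Local Open Scope ring_scope.

(* Let p be an odd prime, p <> 5, h = (p - 1)/2 and n = [p/4] = [h/2].
   1. Modulo p, C(4k, 2k) = 16^k C(h, 2k) for 2k <= h (compare (2m)! with the
      falling factorial h (h-1) ... (h-m+1) using 2h + 1 = 0), so
      S80 p = (-1)^n T with T = sum_k C(h, 2k) / 5^k.
   2. T is the even part of a binomial expansion:
      (5 + w)^h + (5 - w)^h = 2 5^h T whenever w^2 = 5.
   3. Adjoin to F_p a root xi of the 20th cyclotomic polynomial (the ring
      F_p[X]/(Phi_20)).  Then z = xi^4 is a primitive fifth root of unity and
      i = xi^5 a square root of -1.  The Gauss sum w = z - z^2 - z^3 + z^4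
      satisfies w^2 = 5, 5 + w = -2 x^2 and 5 - w = -2 y^2 where x = z - z^4,
      y = z^2 - z^3, hence 2 5^h T xy = (-2)^h (y x^p + x y^p).
   4. The Frobenius a |-> a^p maps x, y to +-x, +-y or +-y, -+x according to
      p mod 5; this evaluates both 5^h = (5/p) and T up to the factor (-2)^h.
   5. Finally (-2)^h = (-1)^n, by applying the Frobenius to 1 + i, where
      -2 = i (1 + i)^2; the signs (-1)^n cancel and injectivity of
      F_p -> F_p[X]/(Phi_20) transports the result back to F_p. *)

Lemma sum_nat_pairs (R : nmodType) (F : nat -> R) (m : nat) :
  \sum_(0 <= i < (2 * m)%N) F i = \sum_(0 <= k < m) (F (2 * k)%N + F (2 * k).+1).
Proof.
elim: m => [|m IH]; first by rewrite !big_geq.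
rewrite (_ : 2 * m.+1 = (2 * m).+2)%N; last by lia.
by rewrite [RHS]big_nat_recr //= -IH !big_nat_recr //= addrA.
Qed.

Lemma binomial_even_part (R : comPzRingType) (a b : R) (h : nat) :
  (a + b) ^+ h + (a - b) ^+ h =
  2%:R * \sum_(0 <= k < (h %/ 2).+1) 'C(h, 2 * k)%:R * a ^+ (h - 2 * k) * b ^+ (2 * k).
Proof.
pose G i := a ^+ (h - i) * (b ^+ i + (- b) ^+ i) *+ 'C(h, i).
have -> : (a + b) ^+ h + (a - b) ^+ h = \sum_(0 <= i < (2 * (h %/ 2).+1)%N) G i.
  have hh : (h.+1 <= 2 * (h %/ 2).+1)%N by rewrite {1}(divn_eq h 2); lia.
  rewrite (big_cat_nat _ (n := h.+1)) //= [X in _ = _ + X]big1_seq ?addr0.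
    rewrite !exprDn -big_split big_mkord.
    by apply: eq_bigr => i _; rewrite /G mulrDr mulrnDl.
  by move=> i /andP [_]; rewrite mem_index_iota => /andP [hi _]; rewrite /G bin_small ?mulr0n.
rewrite sum_nat_pairs big_distrr; apply: eq_big_nat => k _.
have sign_even : (- b) ^+ (2 * k) = b ^+ (2 * k) by rewrite !exprM sqrrN.
have sign_odd : (- b) ^+ (2 * k).+1 = - b ^+ (2 * k).+1.
  by rewrite exprSr sign_even mulrN exprSr.
by rewrite /G sign_odd sign_even subrr mulr0 mul0rn addr0 -mulr_natl [RHS]/=; ring.
Qed.

Definition even_binom_sum (R : unitRingType) (h : nat) (a : R) : R :=
  \sum_(0 <= k < (h %/ 2).+1) 'C(h, 2 * k)%:R / a ^+ k.

Lemma binomial_even_sqrt (R : comUnitRingType) (a b : R) (h : nat) :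
  b ^+ 2 = a -> a \is a GRing.unit ->
  (a + b) ^+ h + (a - b) ^+ h = 2%:R * a ^+ h * even_binom_sum h a.
Proof.
move=> hb ha; rewrite binomial_even_part /even_binom_sum -mulrA; congr (_ * _).
rewrite big_distrr /=; apply: eq_big_nat => k _.
have [hk|hk] := leqP (2 * k) h; last by rewrite bin_small // !mul0r mulr0.
have -> : a ^+ h = a ^+ (h - 2 * k) * a ^+ k * a ^+ k.
  by rewrite -!exprD; congr (_ ^+ _); lia.
rewrite exprM hb
  [RHS](_ : _ = 'C(h, 2 * k)%:R * a ^+ (h - 2 * k) * a ^+ k * (a ^+ k / a ^+ k)).
  by rewrite mulrV ?unitrX // mulr1.
ring.
Qed.

(* Where 2h + 1 vanishes, (2m)! = (-4)^m h (h-1) ... (h-m+1) m! for m <= h: each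
   new factor 2m + 1 equals -2 (h - m).  Up to (m!)^2 this is the congruence
   C(2m, m) = (-4)^m C(h, m) modulo p = 2h + 1. *)
Lemma fact_double_mod (R : comPzRingType) (h m : nat) :
  (2 * h + 1)%N%:R = 0 :> R -> (m <= h)%N ->
  (2 * m)`!%:R = (-4) ^+ m * (h ^_ m * m`!)%N%:R :> R.
Proof.
move=> hp; elim: m => [|m IH] hm; first by rewrite mul1r.
have step : (2 * m).+1%:R = - 2%:R * (h - m)%:R :> R.
  have e : ((2 * m).+1 + 2 * (h - m) = 2 * h + 1)%N by lia.
  move: hp; rewrite -e natrD natrM => /eqP; rewrite addr_eq0 => /eqP ->.
  by rewrite mulNr.
rewrite (_ : 2 * m.+1 = (2 * m).+2)%N; last by lia.
rewrite !factS ffactnSr mulnCA mulnA natrM IH; last by lia.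
rewrite -mulnA mulnCA !natrM step exprS -!natrM; ring.
Qed.

Lemma odd_half (n : nat) : odd n -> n = (2 * (n %/ 2)).+1.
Proof. by move=> hn; have := divn_eq n 2; rewrite modn2 hn /=; lia. Qed.

Lemma prime_ndvd_fact (p m : nat) : prime p -> (m < p)%N -> ~~ (p %| m`!)%N.
Proof.
move=> hp; elim: m => [|m IH] hm; first by rewrite fact0 Euclid_dvd1.
rewrite factS Euclid_dvdM // negb_or IH ?andbT; last by lia.
by apply/negP => /(dvdn_leq (isT : 0 < m.+1)%N); lia.
Qed.

Lemma Fp_natr_neq0 (p m : nat) : prime p -> ~~ (p %| m)%N -> (m%:R : 'F_p) != 0.
Proof. by move=> hp; rewrite (dvdn_pcharf (pchar_Fp hp)). Qed.

Lemma binom_quarter_mod (p k : nat) : prime p -> odd p -> (2 * k <= p %/ 2)%N ->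
  'C(4 * k, 2 * k)%:R = 16%:R ^+ k * 'C(p %/ 2, 2 * k)%:R :> 'F_p.
Proof.
move=> hp hodd hk.
have p_zero : (2 * (p %/ 2) + 1)%N%:R = 0 :> 'F_p.
  by rewrite addn1 -(odd_half hodd) (pcharf0 (pchar_Fp hp)).
have fact_neq0 : (2 * k)`!%:R != 0 :> 'F_p.
  by apply: Fp_natr_neq0 => //; apply: prime_ndvd_fact => //; have := odd_half hodd; lia.
have fact_4k : ('C(4 * k, 2 * k) * ((2 * k)`! * (2 * k)`!) = (2 * (2 * k))`!)%N.
  have := bin_fact (leq_addl (2 * k) (2 * k)).
  by rewrite addnK addnn -mul2n (_ : 4 * k = 2 * (2 * k))%N //; lia.
apply: (mulIf fact_neq0); apply: (mulIf fact_neq0).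
rewrite -!mulrA -!natrM fact_4k (fact_double_mod p_zero hk) mulnA bin_ffact.
by rewrite exprM sqrrN -!natrX.
Qed.

Lemma S80_reduced (p : nat) : prime p -> odd p -> p <> 5%N ->
  S80 p = (-1) ^+ (p %/ 4) * even_binom_sum (p %/ 2) (5%:R : 'F_p).
Proof.
move=> hp hodd h5.
have p_ndvd2 : ~~ (p %| 2)%N.
  by rewrite dvdn_prime2 //; apply/eqP => e; rewrite e in hodd.
have sixteen_neq0 : 16%:R != 0 :> 'F_p.
  by apply: Fp_natr_neq0 => //; rewrite (_ : 16 = 2 ^ 4)%N // Euclid_dvdX // negb_and p_ndvd2.
rewrite /S80 /even_binom_sum -divnMA; congr (_ * _); apply: eq_big_nat => k /andP [_ hk].
rewrite binom_quarter_mod //; last by lia.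
rewrite (_ : 80 = 16 * 5)%N // natrM exprMn invfM [16%:R ^+ k * _]mulrC -mulrA.
by rewrite mulVKf // expf_neq0.
Qed.

Lemma eq_modulo_relation (R : pzRingType) (r a b c : R) :
  r = 0 -> a - b = c * r -> a = b.
Proof. by move=> r0 h; apply/eqP; rewrite -subr_eq0 h r0 mulr0. Qed.

Definition gauss_w (R : pzRingType) (z : R) : R := z - z ^+ 2 - z ^+ 3 + z ^+ 4.
Definition gauss_x (R : pzRingType) (z : R) : R := z - z ^+ 4.
Definition gauss_y (R : pzRingType) (z : R) : R := z ^+ 2 - z ^+ 3.

Section FifthRootOfUnity.

Variables (R : comPzRingType) (z : R).
Hypothesis hz : 1 + z + z ^+ 2 + z ^+ 3 + z ^+ 4 = 0.

Lemma fifth_root_pow5 : z ^+ 5 = 1.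
Proof. by apply: (eq_modulo_relation (c := z - 1) hz); ring. Qed.

Lemma gauss_w_sq : gauss_w z ^+ 2 = 5%:R.
Proof.
apply: (eq_modulo_relation
  (c := - 5%:R + 5%:R * z + z ^+ 2 - 3%:R * z ^+ 3 + z ^+ 4) hz).
by rewrite /gauss_w; ring.
Qed.

Lemma gauss_add : 5%:R + gauss_w z = - 2%:R * gauss_x z ^+ 2.
Proof.
apply: (eq_modulo_relation (c := 5%:R - 4%:R * z - 2%:R * z ^+ 3 + 2%:R * z ^+ 4) hz).
by rewrite /gauss_w /gauss_x; ring.
Qed.

Lemma gauss_sub : 5%:R - gauss_w z = - 2%:R * gauss_y z ^+ 2.
Proof.
apply: (eq_modulo_relation (c := 5%:R - 6%:R * z + 2%:R * z ^+ 2) hz).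
by rewrite /gauss_w /gauss_y; ring.
Qed.

Lemma gauss_xy : gauss_x z * gauss_y z = - gauss_w z.
Proof.
apply: (eq_modulo_relation (c := z - 2%:R * z ^+ 2 + z ^+ 3) hz).
by rewrite /gauss_w /gauss_x /gauss_y; ring.
Qed.

Lemma gauss_y2_sub_x2 : gauss_y z ^+ 2 - gauss_x z ^+ 2 = gauss_w z.
Proof.
apply: (eq_modulo_relation (c := - z + z ^+ 2 + z ^+ 3 - z ^+ 4) hz).
by rewrite /gauss_w /gauss_x /gauss_y; ring.
Qed.

Let zpowE (k : nat) : z ^+ k = z ^+ (k %% 5).
Proof. by rewrite (expr_mod _ fifth_root_pow5). Qed.

Lemma gauss_conj2 : gauss_x (z ^+ 2) = gauss_y z /\ gauss_y (z ^+ 2) = - gauss_x z.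
Proof.
rewrite /gauss_x /gauss_y -!exprM (zpowE (2 * 4)) (zpowE (2 * 3)) opprB.
by split.
Qed.

Lemma gauss_conj3 : gauss_x (z ^+ 3) = - gauss_y z /\ gauss_y (z ^+ 3) = gauss_x z.
Proof.
rewrite /gauss_x /gauss_y -!exprM (zpowE (3 * 4)) (zpowE (3 * 2)) (zpowE (3 * 3)) opprB.
by split.
Qed.

Lemma gauss_conj4 : gauss_x (z ^+ 4) = - gauss_x z /\ gauss_y (z ^+ 4) = - gauss_y z.
Proof.
rewrite /gauss_x /gauss_y -!exprM (zpowE (4 * 4)) (zpowE (4 * 2)) (zpowE (4 * 3)) !opprB.
by split.
Qed.

End FifthRootOfUnity.

Section OddCharacteristic.

Variables (K : comUnitRingType) (p : nat).
Hypotheses (hc : p \in [pchar K]) (hodd : odd p).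

Local Notation h := (p %/ 2)%N.

Let frobeniusE (a : K) : a ^+ p = pFrobenius_aut hc a. Proof. by []. Qed.

(* 2 is invertible, with inverse h + 1, as 2 (h + 1) = p + 1 = 1. *)
Lemma two_unit : (2%:R : K) \is a GRing.unit.
Proof.
apply/unitrPr; exists h.+1%:R; rewrite -natrM (_ : 2 * h.+1 = p + 1)%N.
  by rewrite natrD (pcharf0 hc) add0r.
by have := odd_half hodd; lia.
Qed.

(* With i a square root of -1, (-2)^h = (-1)^[p/4]: write -2 = i (1 + i)^2 and
   apply the Frobenius to 1 + i. *)
Lemma minus_two_pow (i : K) : i ^+ 2 = -1 -> (- 2%:R : K) ^+ h = (-1) ^+ (p %/ 4)%N.
Proof.
move=> hi; have hi' : i ^+ 2 + 1 = 0 by rewrite hi addNr.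
have one_i_unit : 1 + i \is a GRing.unit.
  have e : (1 + i) * (1 - i) = 2%:R by rewrite mulrC -subr_sqr expr1n hi opprK.
  by have := two_unit; rewrite -e unitrM => /andP [].
have minus_two : - 2%:R = (1 + i) ^+ 2 * i.
  by apply: (eq_modulo_relation (c := - (i + 2%:R)) hi'); ring.
have frob_step : (1 + i) * (- 2%:R) ^+ h = (1 + i ^+ p) * i ^+ h.
  rewrite minus_two exprMn -exprM mulrA -exprS -(odd_half hodd).
  by rewrite frobeniusE rmorphD rmorph1.
have i4 : i ^+ 4 = 1 by rewrite (_ : 4 = 2 * 2)%N // exprM hi sqrrN expr1n.
apply: (mulrI one_i_unit); rewrite frob_step -(expr_mod _ i4).
have [p1 | p3] : (p %% 4 = 1 \/ p %% 4 = 3)%N by have := odd_half hodd; lia.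
- rewrite p1 (_ : h = 2 * (p %/ 4))%N; last by lia.
  by rewrite expr1 exprM hi.
- rewrite p3 (_ : h = (2 * (p %/ 4)).+1)%N; last by lia.
  rewrite [i ^+ (2 * _).+1]exprS exprM hi.
  by apply: (eq_modulo_relation (c := (i ^+ 2 - 1) * (-1) ^+ (p %/ 4)) hi'); ring.
Qed.

Lemma frobenius_gauss (z : K) : z ^+ 5 = 1 ->
  gauss_x z ^+ p = gauss_x (z ^+ (p %% 5)) /\ gauss_y z ^+ p = gauss_y (z ^+ (p %% 5)).
Proof.
move=> z5; rewrite (expr_mod _ z5) /gauss_x /gauss_y !frobeniusE.
by rewrite !rmorphB !rmorphXn.
Qed.

Section GaussSumModP.

Variable z : K.
Hypotheses (hz : 1 + z + z ^+ 2 + z ^+ 3 + z ^+ 4 = 0) (h5 : (5%:R : K) \is a GRing.unit).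

Local Notation x := (gauss_x z).
Local Notation y := (gauss_y z).
Local Notation w := (gauss_w z).
Local Notation T := (even_binom_sum h (5%:R : K)).
Local Notation q := ((- 2%:R : K) ^+ h).

Lemma gauss_w_unit : w \is a GRing.unit.
Proof. by rewrite -(unitrX_pos _ (isT : 0 < 2)%N) gauss_w_sq. Qed.

Lemma gauss_xy_unit : x * y \is a GRing.unit.
Proof. by rewrite gauss_xy // unitrN gauss_w_unit. Qed.

(* The binomial expansion of (5 + w)^h + (5 - w)^h, rewritten with 5 + w = -2x^2 and
   5 - w = -2y^2 and multiplied by xy, brings in the Frobenius images x^p, y^p. *)
Lemma gauss_binomial_relation :
  2%:R * 5%:R ^+ h * T * (x * y) = q * (y * x ^+ p + x * y ^+ p).
Proof.
have frob_sq (a : K) : a ^+ p = a * (a ^+ 2) ^+ h.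
  by rewrite {1}(odd_half hodd) exprS exprM.
rewrite -(binomial_even_sqrt h (gauss_w_sq hz) h5) gauss_add // gauss_sub //.
by rewrite !frob_sq !exprMn; ring.
Qed.

(* The Legendre symbol (5/p) = 5^h is read off from w^p = -(x^p y^p). *)
Lemma five_pow_half : w * 5%:R ^+ h = - (x ^+ p * y ^+ p).
Proof.
rewrite -exprMn gauss_xy // exprNn -signr_odd hodd mulN1r opprK.
by rewrite {2}(odd_half hodd) exprS exprM gauss_w_sq.
Qed.

(* p = +-1 mod 5: Frobenius fixes w, 5^h = 1, and T = +-(-2)^h. *)
Lemma even_binom_sum_residue :
  ((p %% 5 = 1)%N -> T = q) /\ ((p %% 5 = 4)%N -> T = - q).
Proof.
have [xp yp] := frobenius_gauss (fifth_root_pow5 hz).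
have key := gauss_binomial_relation.
split=> r; rewrite r in xp yp.
- rewrite expr1 in xp yp.
  have F1 : 5%:R ^+ h = 1 :> K.
    by apply: (mulrI gauss_w_unit); rewrite five_pow_half xp yp gauss_xy // opprK mulr1.
  rewrite xp yp F1 in key.
  apply: (mulIr gauss_xy_unit); apply: (mulrI two_unit).
  by transitivity (2%:R * 1 * T * (x * y)); [ring | rewrite key; ring].
- have [x4 y4] := gauss_conj4 hz; rewrite x4 in xp; rewrite y4 in yp.
  have F1 : 5%:R ^+ h = 1 :> K.
    apply: (mulrI gauss_w_unit).
    by rewrite five_pow_half xp yp mulrNN gauss_xy // opprK mulr1.
  rewrite xp yp F1 in key.
  apply: (mulIr gauss_xy_unit); apply: (mulrI two_unit).
  by transitivity (2%:R * 1 * T * (x * y)); [ring | rewrite key; ring].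
Qed.

(* p = +-2 mod 5: Frobenius negates w, 5^h = -1, and T = +-(-2)^h / 2. *)
Lemma even_binom_sum_nonresidue :
  ((p %% 5 = 2)%N -> T = 2%:R^-1 * q) /\ ((p %% 5 = 3)%N -> T = - (2%:R^-1 * q)).
Proof.
have [xp yp] := frobenius_gauss (fifth_root_pow5 hz).
have key := gauss_binomial_relation.
have w_xy : w = - (x * y) by rewrite gauss_xy // opprK.
split=> r; rewrite r in xp yp.
- have [x2 y2] := gauss_conj2 hz; rewrite x2 in xp; rewrite y2 in yp.
  have F1 : 5%:R ^+ h = -1 :> K.
    apply: (mulrI gauss_w_unit).
    by rewrite five_pow_half xp yp mulrN opprK mulrC gauss_xy // mulrN1.
  rewrite xp yp F1 in key.
  suff e : 2%:R * T = q by rewrite -e mulKr // two_unit.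
  apply: (mulIr gauss_xy_unit).
  transitivity (- (2%:R * -1 * T * (x * y))); first ring.
  rewrite key; transitivity (- (q * (y ^+ 2 - x ^+ 2))); first ring.
  by rewrite gauss_y2_sub_x2 // w_xy; ring.
- have [x3 y3] := gauss_conj3 hz; rewrite x3 in xp; rewrite y3 in yp.
  have F1 : 5%:R ^+ h = -1 :> K.
    apply: (mulrI gauss_w_unit).
    by rewrite five_pow_half xp yp mulNr opprK mulrC gauss_xy // mulrN1.
  rewrite xp yp F1 in key.
  suff e : 2%:R * T = - q by rewrite -mulrN -e mulKr // two_unit.
  apply: (mulIr gauss_xy_unit).
  transitivity (- (2%:R * -1 * T * (x * y))); first ring.
  rewrite key; transitivity (q * (y ^+ 2 - x ^+ 2)); first ring.
  by rewrite gauss_y2_sub_x2 // w_xy; ring.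
Qed.

End GaussSumModP.

End OddCharacteristic.

Lemma rmorph_even_binom_sum (F : fieldType) (R : unitRingType) (f : {rmorphism F -> R})
    (h : nat) (a : F) :
  f (even_binom_sum h a) = even_binom_sum h (f a).
Proof.
rewrite /even_binom_sum rmorph_sum; apply: eq_bigr => k _.
by rewrite fmorph_div rmorph_nat rmorphXn.
Qed.

(* The 20th cyclotomic polynomial; adjoining one of its roots to F_p provides both a
   primitive fifth root of unity and a square root of -1. *)
Definition cyclo20 (R : nzRingType) : {poly R} := 'X^8 - 'X^6 + 'X^4 - 'X^2 + 1.

(* cyclo20 is monic of degree 8, so F_p[X]/(cyclo20) is a nontrivial ring. *)
Lemma cyclo20_monic (R : nzRingType) : cyclo20 R \is monic /\ (1 < size (cyclo20 R))%N.
Proof.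
pose low : {poly R} := - 'X^6 + 'X^4 - 'X^2 + 1.
have -> : cyclo20 R = 'X^8 + low by rewrite /cyclo20 /low !addrA.
have small : (size low < size ('X^8 : {poly R}))%N.
  rewrite size_polyXn ltnS /low.
  repeat (apply: (leq_trans (size_polyD _ _)); rewrite geq_max; apply/andP; split);
    by rewrite ?size_polyN ?size_polyXn ?size_poly1.
split; first by rewrite monicE lead_coefDl // lead_coefXn.
by rewrite size_polyDl // size_polyXn.
Qed.

Lemma in_qpoly_self (R : comNzRingType) (P : {poly R}) :
  P \is monic -> (1 < size P)%N -> in_qpoly P P = 0.
Proof.
move=> monP sizeP; apply: val_inj => /=.
by rewrite /mk_monic sizeP monP Pdiv.RingMonic.rmodpp.
Qed.

Lemma cyclo20_qpoly_root (R : comNzRingType) (xi := in_qpoly (cyclo20 R) 'X) :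
  xi ^+ 8 - xi ^+ 6 + xi ^+ 4 - xi ^+ 2 + 1 = 0.
Proof.
have [monP sizeP] := cyclo20_monic R.
have := in_qpoly_self monP sizeP.
by rewrite [X in in_qpoly _ X]/cyclo20 !rmorphD !rmorphN !rmorphXn rmorph1.
Qed.

Section TwentiethRoot.

Variables (R : comPzRingType) (xi : R).
Hypothesis hxi : xi ^+ 8 - xi ^+ 6 + xi ^+ 4 - xi ^+ 2 + 1 = 0.

Lemma cyclo20_fifth_root :
  1 + xi ^+ 4 + (xi ^+ 4) ^+ 2 + (xi ^+ 4) ^+ 3 + (xi ^+ 4) ^+ 4 = 0.
Proof.
by apply: (eq_modulo_relation (c := xi ^+ 8 + xi ^+ 6 + xi ^+ 4 + xi ^+ 2 + 1) hxi); ring.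
Qed.

Lemma cyclo20_sqrt_minus1 : (xi ^+ 5) ^+ 2 = -1.
Proof. by apply: (eq_modulo_relation (c := xi ^+ 2 + 1) hxi); ring. Qed.

End TwentiethRoot.

Theorem corollary2p6 (p : nat) (hp : prime p) (hodd : odd p) (h5 : p <> 5%N) :
  [/\ (p %% 5 = 1)%N -> S80 p = 1,
      (p %% 5 = 4)%N -> S80 p = -1,
      (p %% 5 = 2)%N -> S80 p = 2%:R^-1
    & (p %% 5 = 3)%N -> S80 p = - 2%:R^-1].
Proof.
pose iota := qpolyC (cyclo20 'F_p).
pose xi := in_qpoly (cyclo20 'F_p) 'X.
have iota_inj : injective iota by exact: fmorph_inj.
have hc : p \in [pchar {poly %/ cyclo20 'F_p}] by rewrite pchar_qpoly pchar_Fp.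
have hxi : xi ^+ 8 - xi ^+ 6 + xi ^+ 4 - xi ^+ 2 + 1 = 0 := cyclo20_qpoly_root 'F_p.
have five_unit : (5%:R : {poly %/ cyclo20 'F_p}) \is a GRing.unit.
  rewrite -(rmorph_nat iota) rmorph_unit // unitfE Fp_natr_neq0 //.
  by rewrite dvdn_prime2 //; apply/eqP.
have S80_image : iota (S80 p) =
    (-1) ^+ (p %/ 4) * even_binom_sum (p %/ 2) (5%:R : {poly %/ cyclo20 'F_p}).
  by rewrite S80_reduced // /iota rmorphM rmorphXn rmorphN1 rmorph_even_binom_sum rmorph_nat.
have q_sign := minus_two_pow hc hodd (cyclo20_sqrt_minus1 hxi).
have [T1 T4] := even_binom_sum_residue hc hodd (cyclo20_fifth_root hxi) five_unit.
have [T2 T3] := even_binom_sum_nonresidue hc hodd (cyclo20_fifth_root hxi) five_unit.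
(* Since (-2)^h = (-1)^[p/4], the two signs cancel and only c remains. *)
have value (c : 'F_p) :
    even_binom_sum (p %/ 2) 5%:R = iota c * (- 2%:R) ^+ (p %/ 2) -> S80 p = c.
  move=> e; apply: iota_inj.
  by rewrite S80_image e q_sign mulrCA -exprMn mulrNN mulr1 expr1n mulr1.
split=> r; apply: value.
- by rewrite T1 // /iota rmorph1 mul1r.
- by rewrite T4 // /iota rmorphN1 mulN1r.
- by rewrite T2 // /iota fmorphV rmorph_nat.
- by rewrite T3 // /iota rmorphN fmorphV rmorph_nat mulNr.
Qed.
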